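(* Let $\lambda_1,\lambda_2$ be as in the context, $K\in(-1,1)$ with $K\neq0$, let $b$ solve $b'(v)=\sqrt{\lambda_1^2-K(\lambda_1^2\cos^2 b(v)+\lambda_2^2\sin^2 b(v))}$, $b(0)=0$, and let $W>0$ be the unique positive real number with $b(W)=\pi$. Let $x_3$ be the solution of $x_3'(v)=\dfrac{\lambda_1\lambda_2K}{\lambda_1+b'(v)}$ with $x_3(0)=0$. Then: (1) $x_3$ is a well-defined bijection from $\mathbb{R}$ to $\mathbb{R}$; (2) $x_3$ is odd; (3) $x_3(v+W)=x_3(v)+x_3(W)$ for all $v\in\mathbb{R}$.
   Context: Either $\lambda_1>\lambda_2>0$ or $\lambda_1=\lambda_2=1$. (The solution $b$ exists on $\mathbb{R}$ and is an increasing bijection of $\mathbb{R}$, so $W$ is well defined.) *)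

From Stdlib Require Import Reals.
Open Scope R_scope.

Definition bprime (l1 l2 K y : R) : R :=
  sqrt (l1 ^ 2 - K * (l1 ^ 2 * (cos y) ^ 2 + l2 ^ 2 * (sin y) ^ 2)).

Definition x3prime (l1 l2 K : R) (b : R -> R) (v : R) : R :=
  l1 * l2 * K / (l1 + bprime l1 l2 K (b v)).

Definition is_x3 (l1 l2 K : R) (b x3 : R -> R) : Prop :=
  x3 0 = 0 /\ forall v, derivable_pt_lim x3 v (x3prime l1 l2 K b v).

(** The right-hand side [g := bprime l1 l2 K] of the ODE for [b] is continuous, positive,
    even and [PI]-periodic. Solutions of an autonomous ODE [b' = g b] with positive
    continuous [g] are determined by their initial value (they invert a primitive of
    [1/g]), so [-b(-v)] and [b(v + W) - PI] are again the solution [b]: [b] is odd and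
    [b(v + W) = b v + PI]. Hence [x3' = l1 l2 K / (l1 + g (b v))] is even and
    [W]-periodic, which makes its primitive [x3] odd and additive under the shift by [W];
    finally [x3'] has the constant sign of [K] and is bounded away from [0], because [g]
    is bounded, so [x3] is a bijection. *)

From Stdlib Require Import Reals Lra Psatz.
From Coquelicot Require Import Coquelicot.
Open Scope R_scope.

Lemma continuous_antiderivative (h : R -> R) : (forall x, continuity_pt h x) ->
  exists H : R -> R, H 0 = 0 /\ forall x, derivable_pt_lim H x (h x).
Proof.
  intros Hc.
  assert (Hc' : forall x, continuous h x) by (intros x; apply continuity_pt_filterlim, Hc).
  exists (fun x => RInt h 0 x). split.
  - apply (RInt_point (V := R_CompleteNormedModule)).
  - intros x. apply is_derive_Reals, (is_derive_RInt (V := R_NormedModule) _ _ 0).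
    + apply filter_forall. intros y. apply (RInt_correct (V := R_CompleteNormedModule)).
      apply ex_RInt_continuous. intros; apply Hc'.
    + apply Hc'.
Qed.

Lemma derivable_pt_lim_comp_opp (f : R -> R) (x l : R) :
  derivable_pt_lim f (- x) l -> derivable_pt_lim (fun v => f (- v)) x (- l).
Proof.
  intros Hf.
  pose proof (derivable_pt_lim_opp id x 1 (derivable_pt_lim_id x)) as Hopp.
  replace (- l) with (l * -1) by ring.
  exact (derivable_pt_lim_comp _ f x _ _ Hopp Hf).
Qed.

Lemma derivable_pt_lim_comp_shift (f : R -> R) (a x l : R) :
  derivable_pt_lim f (x + a) l -> derivable_pt_lim (fun v => f (v + a)) x l.
Proof.
  intros Hf.
  pose proof (derivable_pt_lim_plus id (fct_cte a) x 1 0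
                (derivable_pt_lim_id x) (derivable_pt_lim_const a x)) as Hshift.
  replace l with (l * (1 + 0)) by ring.
  exact (derivable_pt_lim_comp _ f x _ _ Hshift Hf).
Qed.

Section RealDerivatives.
Variables f f' : R -> R.
Hypothesis f_deriv : forall x, derivable_pt_lim f x (f' x).

Lemma derivable_pt_lim_0_const : (forall x, f' x = 0) -> forall x, f x = f 0.
Proof.
  intros H0 x.
  destruct (MVT_abs f f' 0 x (fun c _ => f_deriv c)) as [c [Hc _]].
  rewrite H0, Rabs_R0, Rmult_0_l in Hc.
  apply Rabs_eq_0 in Hc. lra.
Qed.

Lemma derivable_pt_lim_pos_increasing :
  (forall x, 0 < f' x) -> forall a b, a < b -> f a < f b.
Proof.
  intros Hpos a b Hab.
  destruct (MVT_cor2 f f' a b Hab (fun c _ => f_deriv c)) as [c [Hc _]].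
  specialize (Hpos c). nra.
Qed.

Lemma derivable_pt_lim_pos_injective :
  (forall x, 0 < f' x) -> forall a b, f a = f b -> a = b.
Proof.
  intros Hpos a b Hfab.
  destruct (Rtotal_order a b) as [Hab | [Hab | Hab]]; [| exact Hab |].
  - pose proof (derivable_pt_lim_pos_increasing Hpos a b Hab); lra.
  - pose proof (derivable_pt_lim_pos_increasing Hpos b a Hab); lra.
Qed.

Lemma derivable_pt_lim_ge_growth (m : R) :
  (forall x, m <= f' x) -> forall a b, a <= b -> m * (b - a) <= f b - f a.
Proof.
  intros Hm a b [Hab | ->]; [| lra].
  destruct (MVT_cor2 f f' a b Hab (fun c _ => f_deriv c)) as [c [Hc _]].
  specialize (Hm c). nra.
Qed.

Lemma derivable_pt_lim_ge_bijective (m : R) : 0 < m -> (forall x, m <= f' x) ->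
  (forall u v, f u = f v -> u = v) /\ (forall y, exists v, f v = y).
Proof.
  intros Hm0 Hm. split.
  - apply derivable_pt_lim_pos_injective. intros x. specialize (Hm x). lra.
  - intros y. set (T := Rabs (y - f 0) / m).
    assert (HT : 0 <= T) by (apply Rdiv_le_0_compat; [apply Rabs_pos | lra]).
    assert (HmT : m * T = Rabs (y - f 0)) by (unfold T; field; lra).
    pose proof (derivable_pt_lim_ge_growth m Hm 0 T HT) as Hright.
    pose proof (derivable_pt_lim_ge_growth m Hm (- T) 0 ltac:(lra)) as Hleft.
    pose proof (Rle_abs (y - f 0)). pose proof (Rle_abs (- (y - f 0))).
    rewrite Rabs_Ropp in *.
    assert (f_cont : continuity f).
    { intros x. apply derivable_continuous_pt. exists (f' x). apply f_deriv. }
    destruct (IVT_gen f (- T) T y f_cont) as [v [_ Hv]]; [| exists v; exact Hv].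
    rewrite Rmin_left, Rmax_right; lra.
Qed.

End RealDerivatives.

Lemma derivable_pt_lim_le_bijective (f f' : R -> R) (m : R) :
  (forall x, derivable_pt_lim f x (f' x)) -> 0 < m -> (forall x, f' x <= - m) ->
  (forall u v, f u = f v -> u = v) /\ (forall y, exists v, f v = y).
Proof.
  intros Hf Hm0 Hm.
  destruct (derivable_pt_lim_ge_bijective (fun v => - f v) (fun v => - f' v)
              (fun x => derivable_pt_lim_opp f x _ (Hf x)) m Hm0)
    as [Hinj Hsurj].
  { intros x. specialize (Hm x). lra. }
  split.
  - intros u v Huv. apply Hinj. rewrite Huv. reflexivity.
  - intros y. destruct (Hsurj (- y)) as [v Hv]. exists v. lra.
Qed.

Lemma odd_of_even_derivative (f h : R -> R) :
  f 0 = 0 -> (forall x, derivable_pt_lim f x (h x)) -> (forall x, h (- x) = h x) ->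
  forall v, f (- v) = - f v.
Proof.
  intros Hf0 Hf Heven v.
  assert (Hsum : forall x, derivable_pt_lim (fun v => f v + f (- v)) x (h x + - h (- x)))
    by (intros x; apply derivable_pt_lim_plus, derivable_pt_lim_comp_opp; apply Hf).
  pose proof (derivable_pt_lim_0_const _ _ Hsum ltac:(intros x; cbv beta; rewrite Heven; ring) v) as E.
  cbv beta in E. rewrite Ropp_0, Hf0 in E. lra.
Qed.

Lemma shift_of_periodic_derivative (f h : R -> R) (T : R) :
  (forall x, derivable_pt_lim f x (h x)) -> (forall x, h (x + T) = h x) ->
  forall v, f (v + T) - f v = f T - f 0.
Proof.
  intros Hf Hper v.
  assert (Hdiff : forall x, derivable_pt_lim (fun v => f (v + T) - f v) x (h (x + T) - h x))
    by (intros x; apply derivable_pt_lim_minus; [apply derivable_pt_lim_comp_shift|]; apply Hf).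
  pose proof (derivable_pt_lim_0_const _ _ Hdiff ltac:(intros x; cbv beta; rewrite Hper; ring) v) as E.
  cbv beta in E. rewrite Rplus_0_l in E. exact E.
Qed.

Definition solves_autonomous (g c : R -> R) : Prop :=
  forall v, derivable_pt_lim c v (g (c v)).

Section AutonomousODE.
Variable g : R -> R.
Hypothesis g_cont : forall y, continuity_pt g y.
Hypothesis g_pos : forall y, 0 < g y.

Lemma autonomous_ode_unique (c d : R -> R) :
  c 0 = d 0 -> solves_autonomous g c -> solves_autonomous g d -> forall v, c v = d v.
Proof.
  intros Hcd Hc Hd v.
  destruct (continuous_antiderivative (fun y => / g y)) as [G [_ HG]].
  { intros y. apply (continuity_pt_inv g), Rgt_not_eq, g_pos. apply g_cont. }
  (* Along any solution [e], the chain rule gives [(G o e)' = (1/g(e)) * g(e) = 1]. *)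
  assert (G_along : forall e, solves_autonomous g e -> forall v, G (e v) - v = G (e 0) - 0).
  { intros e He.
    apply (derivable_pt_lim_0_const (fun x => G (e x) - x)
             (fun x => / g (e x) * g (e x) - 1)).
    - intros x. apply derivable_pt_lim_minus, derivable_pt_lim_id.
      exact (derivable_pt_lim_comp e G x _ _ (He x) (HG _)).
    - intros x. field. apply Rgt_not_eq, g_pos. }
  apply (derivable_pt_lim_pos_injective G (fun y => / g y) HG).
  { intros y. apply Rinv_0_lt_compat, g_pos. }
  pose proof (G_along c Hc v). pose proof (G_along d Hd v).
  rewrite Hcd in *. lra.
Qed.

Lemma autonomous_ode_odd (c : R -> R) : (forall y, g (- y) = g y) ->
  c 0 = 0 -> solves_autonomous g c -> forall v, c (- v) = - c v.
Proof.
  intros Heven Hc0 Hc v.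
  enough (E : - c (- v) = c v) by lra.
  apply (autonomous_ode_unique (fun v => - c (- v))); [| | exact Hc].
  - rewrite Ropp_0, Hc0. ring.
  - intros x. rewrite <- Heven, Ropp_involutive, <- (Ropp_involutive (g (c (- x)))).
    apply derivable_pt_lim_opp with (f := fun v => c (- v)).
    apply derivable_pt_lim_comp_opp, Hc.
Qed.

Lemma autonomous_ode_shift (c : R -> R) (P W : R) : (forall y, g (y + P) = g y) ->
  solves_autonomous g c -> c W = c 0 + P -> forall v, c (v + W) = c v + P.
Proof.
  intros Hper Hc HW v.
  enough (E : c (v + W) - P = c v) by lra.
  apply (autonomous_ode_unique (fun v => c (v + W) - P)); [| | exact Hc].
  - rewrite Rplus_0_l, HW. ring.
  - intros x. rewrite <- (Hper (c (x + W) - P)).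
    replace (c (x + W) - P + P) with (c (x + W)) by ring.
    replace (g (c (x + W))) with (g (c (x + W)) - 0) by ring.
    apply derivable_pt_lim_minus; [| apply derivable_pt_lim_const].
    apply derivable_pt_lim_comp_shift, Hc.
Qed.

End AutonomousODE.

Lemma bprime_opp (l1 l2 K y : R) : bprime l1 l2 K (- y) = bprime l1 l2 K y.
Proof. unfold bprime. rewrite cos_neg, sin_neg. f_equal. ring. Qed.

Lemma bprime_add_PI (l1 l2 K y : R) : bprime l1 l2 K (y + PI) = bprime l1 l2 K y.
Proof. unfold bprime. rewrite neg_cos, neg_sin. f_equal. ring. Qed.

Lemma x3prime_opp (l1 l2 K : R) (b : R -> R) (v : R) :
  (forall v, b (- v) = - b v) -> x3prime l1 l2 K b (- v) = x3prime l1 l2 K b v.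
Proof. intros Hodd. unfold x3prime. rewrite Hodd, bprime_opp. reflexivity. Qed.

Lemma x3prime_shift (l1 l2 K : R) (b : R -> R) (W v : R) :
  (forall v, b (v + W) = b v + PI) -> x3prime l1 l2 K b (v + W) = x3prime l1 l2 K b v.
Proof. intros Hper. unfold x3prime. rewrite Hper, bprime_add_PI. reflexivity. Qed.

Section BPrime.
Variables l1 l2 K : R.
Hypothesis hl : 0 < l2 <= l1.
Hypothesis hK : -1 < K < 1.

Lemma bprime_radicand_bounds (y : R) :
  0 < l1 ^ 2 - K * (l1 ^ 2 * cos y ^ 2 + l2 ^ 2 * sin y ^ 2) <= 2 * l1 ^ 2.
Proof.
  pose proof (sin2_cos2 y) as Hpyth. unfold Rsqr in Hpyth.
  pose proof (pow2_ge_0 (cos y)). pose proof (pow2_ge_0 (sin y)).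
  assert (Hl : l2 ^ 2 <= l1 ^ 2) by nra.
  assert (Hq : 0 <= l1 ^ 2 * cos y ^ 2 + l2 ^ 2 * sin y ^ 2 <= l1 ^ 2) by nra.
  set (q := l1 ^ 2 * cos y ^ 2 + l2 ^ 2 * sin y ^ 2) in *.
  assert (Hl1 : 0 < l1 ^ 2) by nra.
  destruct (Rle_lt_dec K 0); split; nra.
Qed.

Lemma bprime_pos (y : R) : 0 < bprime l1 l2 K y.
Proof. apply sqrt_lt_R0, bprime_radicand_bounds. Qed.

Lemma bprime_le (y : R) : bprime l1 l2 K y <= sqrt (2 * l1 ^ 2).
Proof. apply sqrt_le_1_alt, bprime_radicand_bounds. Qed.

Lemma bprime_continuous (y : R) : continuity_pt (bprime l1 l2 K) y.
Proof.
  apply (continuity_pt_comp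
           (fun y => l1 ^ 2 - K * (l1 ^ 2 * cos y ^ 2 + l2 ^ 2 * sin y ^ 2)) sqrt).
  - apply derivable_continuous_pt. reg.
  - apply continuity_pt_sqrt. left; apply bprime_radicand_bounds.
Qed.

Section X3.
Variable b : R -> R.
Hypothesis b_sol : solves_autonomous (bprime l1 l2 K) b.

Lemma x3prime_continuous (v : R) : continuity_pt (x3prime l1 l2 K b) v.
Proof.
  apply (continuity_pt_div (fct_cte (l1 * l2 * K)) (fct_cte l1 + comp (bprime l1 l2 K) b)%F).
  - apply continuity_pt_const. intros ? ?; reflexivity.
  - apply continuity_pt_plus; [apply continuity_pt_const; intros ? ?; reflexivity |].
    apply continuity_pt_comp; [| apply bprime_continuous].
    apply derivable_continuous_pt. eexists. apply b_sol.
  - unfold plus_fct, fct_cte, comp. pose proof (bprime_pos (b v)). lra.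
Qed.

Lemma x3prime_bijective (x3 : R -> R) : K <> 0 ->
  (forall v, derivable_pt_lim x3 v (x3prime l1 l2 K b v)) ->
  (forall u v, x3 u = x3 v -> u = v) /\ (forall y, exists v, x3 v = y).
Proof.
  intros HK0 Hx3.
  set (M := l1 + sqrt (2 * l1 ^ 2)).
  assert (Hinv : forall v, 0 < / M <= / (l1 + bprime l1 l2 K (b v))).
  { intros v. pose proof (bprime_pos (b v)). pose proof (bprime_le (b v)).
    split; [apply Rinv_0_lt_compat | apply Rinv_le_contravar]; unfold M; lra. }
  assert (Hl : 0 < l1 * l2) by nra.
  unfold x3prime, Rdiv in Hx3.
  set (c := l1 * l2 * K) in *.
  destruct (Rdichotomy _ _ HK0) as [HK | HK];
    [assert (Hc : c < 0) by (unfold c; nra) | assert (Hc : 0 < c) by (unfold c; nra)].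
  - apply (derivable_pt_lim_le_bijective _ _ (- (c * / M)) Hx3).
    + specialize (Hinv 0). nra.
    + intros v. specialize (Hinv v). nra.
  - apply (derivable_pt_lim_ge_bijective _ _ Hx3 (c * / M)).
    + specialize (Hinv 0). nra.
    + intros v. specialize (Hinv v). nra.
Qed.

End X3.
End BPrime.

Theorem proposition4p3 (l1 l2 K : R) (b : R -> R) (W : R)
  (hl : (l1 > l2 /\ l2 > 0) \/ (l1 = 1 /\ l2 = 1))
  (hK : -1 < K < 1) (hK0 : K <> 0)
  (hb0 : b 0 = 0)
  (hb : forall v, derivable_pt_lim b v (bprime l1 l2 K (b v)))
  (hW : W > 0) (hbW : b W = PI) :
  (exists x3 : R -> R, is_x3 l1 l2 K b x3) /\
  forall x3 : R -> R, is_x3 l1 l2 K b x3 ->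
    ((forall u v, x3 u = x3 v -> u = v) /\ (forall y, exists v, x3 v = y)) /\
    (forall v, x3 (- v) = - x3 v) /\
    (forall v, x3 (v + W) = x3 v + x3 W).
Proof.
  assert (hl' : 0 < l2 <= l1) by (destruct hl as [[? ?] | [-> ->]]; lra).
  pose proof (bprime_continuous l1 l2 K hl' hK) as g_cont.
  pose proof (bprime_pos l1 l2 K hl' hK) as g_pos.
  assert (b_odd : forall v, b (- v) = - b v)
    by exact (autonomous_ode_odd _ g_cont g_pos b (bprime_opp l1 l2 K) hb0 hb).
  assert (b_shift : forall v, b (v + W) = b v + PI).
  { apply (autonomous_ode_shift _ g_cont g_pos b PI W (bprime_add_PI l1 l2 K) hb).
    rewrite hb0, hbW. ring. }
  split.
  - exact (continuous_antiderivative _ (x3prime_continuous l1 l2 K hl' hK b hb)).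
  - intros x3 [Hx0 Hx]. split; [| split].
    + exact (x3prime_bijective l1 l2 K hl' hK b x3 hK0 Hx).
    + exact (odd_of_even_derivative x3 _ Hx0 Hx (fun v => x3prime_opp l1 l2 K b v b_odd)).
    + intros v.
      pose proof (shift_of_periodic_derivative x3 _ W Hx
                    (fun v => x3prime_shift l1 l2 K b W v b_shift) v).
      lra.
Qed.
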